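(* Any nested logit that satisfies Regularity and Richness is a random utility nested logit, i.e., it admits a nested logit representation in which $\eta_i\le 1$ for every $i\le K$.
   Context: Here the set of alternatives $X$ may be infinite, and $\mathscr{A}$ is the collection of nonempty finite subsets of $X$. A stochastic choice function is $p:X\times\mathscr{A}\to[0,1]$ with $\sum_{a\in A}p(a,A)=1$, $p(x,A)=0$ for $x\notin A$, $p(a,A)>0$ for $a\in A$; $A\cup y=A\cup\{y\}$. $a\sim_p b$ means $\frac{p(a,A)}{p(b,A)}=\frac{p(a,\{a,b\})}{p(b,\{a,b\})}$ for all $A\in\mathscr{A}$ containing $a,b$. Nested logit: there exist a finite partition $X_1,\dots,X_K$ of $X$, $u:X\to\mathbb{R}_{++}$ and $\eta_1,\dots,\eta_K>0$ such that for every $A\in\mathscr{A}$ and $a\in A\cap X_i$, $p(a,A)=\frac{\big(\sum_{x\in A\cap X_i}u(x)\big)^{\eta_i}}{\sum_{j:A\cap X_j\ne\emptyset}\big(\sum_{y\in A\cap X_j}u(y)\big)^{\eta_j}}\cdot\frac{u(a)}{\sum_{b\in A\cap X_i}u(b)}$. Regularity: $p(x,A\cup y)\le p(x,A)$ for all $A\in\mathscr{A}$, $x\in A$, $y\in X$. Richness: for any $a\in X$ and $\rho\in(0,1)$ there is $b\in X$ with $a\sim_p b$ and $p(a,\{a,b\})=\rho$. *)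

From HB Require Import structures.
From mathcomp Require Import all_boot all_order all_algebra.
From mathcomp Require Import finmap.
From mathcomp Require Import all_classical all_reals all_analysis.
Set Implicit Arguments. Unset Strict Implicit. Unset Printing Implicit Defensive.
Import Order.TTheory GRing.Theory Num.Theory.
Local Open Scope ring_scope.
Local Open Scope fset_scope.

Section NestedLogit.
Variables (R : realType) (X : choiceType).

Definition stochastic_choice (p : X -> {fset X} -> R) : Prop :=
  forall A : {fset X}, A != fset0 ->
    [/\ \sum_(a <- A) p a A = 1,
        (forall x, x \notin A -> p x A = 0) &
        (forall a, a \in A -> 0 < p a A)].

Definition block_sum (K : nat) (cls : X -> 'I_K) (u : X -> R)
    (A : {fset X}) (j : 'I_K) : R :=
  \sum_(x <- A | cls x == j) u x.

(* p has the nested logit representation (X_j = cls^{-1}(j), j < K; u; eta) *)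
Definition nested_logit_rep (p : X -> {fset X} -> R) (K : nat)
    (cls : X -> 'I_K) (u : X -> R) (eta : 'I_K -> R) : Prop :=
  [/\ (forall j : 'I_K, exists x, cls x = j),
      (forall x, 0 < u x),
      (forall j, 0 < eta j) &
      (forall A : {fset X}, A != fset0 -> forall a, a \in A ->
         p a A =
           powR (block_sum cls u A (cls a)) (eta (cls a)) /
           (\sum_(j < K | [fset x in A | cls x == j] != fset0)
               powR (block_sum cls u A j) (eta j))
           * (u a / block_sum cls u A (cls a)))].

Definition nested_logit (p : X -> {fset X} -> R) : Prop :=
  exists (K : nat) (cls : X -> 'I_K) (u : X -> R) (eta : 'I_K -> R),
    nested_logit_rep p cls u eta.

Definition random_utility_nested_logit (p : X -> {fset X} -> R) : Prop :=
  exists (K : nat) (cls : X -> 'I_K) (u : X -> R) (eta : 'I_K -> R),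
    nested_logit_rep p cls u eta /\ (forall j, eta j <= 1).

Definition sim_p (p : X -> {fset X} -> R) (a b : X) : Prop :=
  forall A : {fset X}, a \in A -> b \in A ->
    p a A / p b A = p a [fset a; b] / p b [fset a; b].

Definition regularity (p : X -> {fset X} -> R) : Prop :=
  forall A : {fset X}, A != fset0 -> forall x, x \in A -> forall y : X,
    p x (A `|` [fset y]) <= p x A.

Definition richness (p : X -> {fset X} -> R) : Prop :=
  forall (a : X) (rho : R), 0 < rho < 1 ->
    exists b : X, sim_p p a b /\ p a [fset a; b] = rho.

End NestedLogit.

(* With at least two nests, a nest X_i with eta_i > 1 must be a singleton.  The
   nest factor then grows superlinearly in the nest's total utility, so adding to a menu a
   nest-mate y of an alternative b raises b's choice probability as soon as
   u(b) = u(y) is small compared with an alternative c outside the nest,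
   contradicting Regularity; Richness supplies such b and y, because every
   alternative equivalent (~_p) to a member of a nest with eta_i > 1 stays in
   that nest.  A singleton nest {x} with eta_i > 1 is then absorbed by replacing
   u(x) with u(x)^eta_i and eta_i with 1.  If there is only one nest, the nest
   factor is identically 1 and eta can be set to 1. *)

From HB Require Import structures.
From mathcomp Require Import all_boot all_order all_algebra.
From mathcomp Require Import finmap.
From mathcomp Require Import all_classical all_reals all_analysis.
From mathcomp Require Import ring lra.
Set Implicit Arguments. Unset Strict Implicit. Unset Printing Implicit Defensive.
Import Order.TTheory GRing.Theory Num.Theory.
Local Open Scope fset_scope.
Local Open Scope ring_scope.

Lemma sum_pred2 (I : finType) (V : nmodType) (P : pred I) (F : I -> V) i k :
  i != k -> P =1 predU (pred1 i) (pred1 k) -> \sum_(j | P j) F j = F i + F k.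
Proof.
move=> ik HP; rewrite (bigD1 i) ?HP /= ?eqxx //; congr (_ + _).
apply: big_pred1 => j /=; rewrite HP /=.
by case: (eqVneq j i) => [->|]; rewrite ?(negbTE ik) ?andbT.
Qed.

Lemma powR_superlinear (R : realType) (r x y : R) : 1 < r -> 0 < x -> x < y ->
  y * x `^ r < x * y `^ r.
Proof.
move=> r1 x0 xy; have y0 : 0 < y by apply: lt_trans xy.
have r0 : 0 < r by apply: lt_trans r1.
rewrite -(mulr_powRB1 (ltW x0) r0) -(mulr_powRB1 (ltW y0) r0) mulrCA.
rewrite !ltr_pM2l //; apply: gt0_ltr_powR => //; first by rewrite subr_gt0.
  by rewrite nnegrE ltW.
by rewrite nnegrE ltW.
Qed.

Lemma exists_powR_lt (R : realType) (r m : R) : 0 < r -> 0 < m ->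
  exists2 t, 0 < t & t `^ r < m.
Proof.
move=> r0 m0; have m20 : 0 < m / 2 by apply: divr_gt0.
exists ((m / 2) `^ r^-1); first exact: powR_gt0.
rewrite -powRrM mulVf ?gt_eqF // powRr1 ?ltW //; lra.
Qed.

Lemma two_lt_powR2 (R : realType) (r : R) : 1 < r -> 2 < 2 `^ r.
Proof.
move=> r1; have lt12 : (1 : R) < 2 by lra.
by have := powR_superlinear r1 ltr01 lt12; rewrite powR1 mulr1 mul1r.
Qed.

Section BlockSum.
Variables (R : realType) (X : choiceType) (K : nat) (cls : X -> 'I_K).
Implicit Types (u : X -> R) (A : {fset X}).

Lemma block_sum_seq u A s j : uniq s -> A =i s ->
  block_sum cls u A j = \sum_(z <- s | cls z == j) u z.
Proof. by move=> us As; apply: perm_big; apply: uniq_perm. Qed.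

Lemma nest_nonempty_seq A s j : A =i s ->
  ([fset x in A | cls x == j] != fset0) = has (fun z => cls z == j) s.
Proof.
move=> As; apply/fset0Pn/hasP => [[z]|[z zs cz]].
  by rewrite !inE As => /andP[]; exists z.
by exists z; rewrite !inE As zs.
Qed.

Lemma block_sum_gt0 u A x : (forall y, 0 < u y) -> x \in A ->
  0 < block_sum cls u A (cls x).
Proof.
move=> u0 xA; rewrite /block_sum (big_rem x) //= eqxx.
by apply: ltr_pwDl => //; apply: sumr_ge0 => z _; apply: ltW.
Qed.

Lemma block_sum_single u A j x : x \in A -> cls x = j ->
  (forall y, cls y = j -> y = x) -> block_sum cls u A j = u x.
Proof.
move=> xA cx xj; rewrite /block_sum (big_rem x) // cx eqxx /= big1_seq ?addr0 //.
move=> z /andP[/eqP/xj -> zA]; exfalso; move: zA.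
by rewrite mem_rem_uniqF ?fset_uniq.
Qed.

Lemma block_sum_eq0 u A j : (forall y, y \in A -> cls y != j) ->
  block_sum cls u A j = 0.
Proof.
move=> Aj; rewrite /block_sum big1_seq // => z /andP[/eqP cz zA].
by move: (Aj z zA); rewrite cz eqxx.
Qed.

Definition nest_total u (eta : 'I_K -> R) A :=
  \sum_(j < K | [fset x in A | cls x == j] != fset0)
    block_sum cls u A j `^ eta j.

Lemma nest_total_gt0 u eta A x : (forall y, 0 < u y) -> x \in A ->
  0 < nest_total u eta A.
Proof.
move=> u0 xA; rewrite /nest_total (bigD1 (cls x)) /=; last first.
  by apply/fset0Pn; exists x; rewrite !inE xA eqxx.
apply: ltr_pwDl; first by rewrite powR_gt0 ?block_sum_gt0.
by apply: sumr_ge0 => j _; apply: powR_ge0.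
Qed.

End BlockSum.

Section NestedLogitRep.
Variables (R : realType) (X : choiceType) (p : X -> {fset X} -> R) (K : nat)
  (cls : X -> 'I_K) (u : X -> R) (eta : 'I_K -> R).
Hypothesis rep : nested_logit_rep p cls u eta.

Local Notation bs := (block_sum cls u).

Lemma nested_logit_u_gt0 x : 0 < u x. Proof. by case: rep. Qed.

Lemma nested_logit_eta_gt0 j : 0 < eta j. Proof. by case: rep. Qed.

Local Notation u_gt0 := nested_logit_u_gt0.

Lemma nested_logitE (A : {fset X}) x : x \in A ->
  p x A = bs A (cls x) `^ eta (cls x) / nest_total cls u eta A * (u x / bs A (cls x)).
Proof.
move=> xA; have A0 : A != fset0 by apply/fset0Pn; exists x.
by case: rep => _ _ _; apply.
Qed.

Lemma nested_logit_ratio (A : {fset X}) x y : x \in A -> y \in A ->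
  p x A / p y A = (bs A (cls x) `^ eta (cls x) * (u x / bs A (cls x))) /
                  (bs A (cls y) `^ eta (cls y) * (u y / bs A (cls y))).
Proof.
move=> xA yA; rewrite !nested_logitE //.
have D0 := nest_total_gt0 cls eta u_gt0 xA.
have Bx := block_sum_gt0 cls u_gt0 xA.
have By := block_sum_gt0 cls u_gt0 yA.
have Py := powR_gt0 (eta (cls y)) By.
have uy := u_gt0 y.
by field; rewrite ?gt_eqF.
Qed.

Lemma nested_logit_self x : p x [fset x; x] = 1.
Proof.
have As : [fset x; x] =i [:: x] by move=> z; rewrite !inE orbb.
rewrite nested_logitE ?inE ?eqxx // /nest_total (block_sum_seq cls u _ _ As) //.
rewrite (big_pred1 (cls x)); last by move=> j; rewrite (nest_nonempty_seq cls _ As) /= orbF eq_sym.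
rewrite (block_sum_seq cls u _ _ As) // !big_cons big_nil eqxx addr0.
by rewrite !divff ?mulr1 ?gt_eqF ?powR_gt0 ?u_gt0.
Qed.

Lemma nested_logit_pair_same_nest x y : cls y = cls x -> x != y ->
  p x [fset x; y] = u x / (u x + u y).
Proof.
move=> cy xy.
have As : [fset x; y] =i [:: x; y] by move=> z; rewrite !inE.
have us : uniq [:: x; y] by rewrite /= !inE xy.
rewrite nested_logitE ?inE ?eqxx // /nest_total (big_pred1 (cls x)); last first.
  by move=> j; rewrite (nest_nonempty_seq cls _ As) /= orbF cy orbb eq_sym.
rewrite (block_sum_seq cls u _ us As) !big_cons big_nil cy eqxx addr0.
by rewrite divff ?mul1r // gt_eqF ?powR_gt0 ?addr_gt0 ?u_gt0.
Qed.

Lemma nested_logit_pair x c : cls x != cls c ->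
  p x [fset x; c] = u x `^ eta (cls x) / (u x `^ eta (cls x) + u c `^ eta (cls c)).
Proof.
move=> nxc; have xc : x != c by apply: contraNneq nxc => ->.
have As : [fset x; c] =i [:: x; c] by move=> z; rewrite !inE.
have us : uniq [:: x; c] by rewrite /= !inE xc.
rewrite nested_logitE ?inE ?eqxx // /nest_total (sum_pred2 _ nxc); last first.
  by move=> j; rewrite (nest_nonempty_seq cls _ As) /= orbF !(eq_sym j).
rewrite !(block_sum_seq cls u _ us As) !big_cons !big_nil !eqxx eq_sym (negbTE nxc).
by rewrite !addr0 divff ?mulr1 ?gt_eqF ?u_gt0.
Qed.

Lemma nested_logit_triple x y c : cls y = cls x -> x != y -> cls x != cls c ->
  p x ([fset x; c] `|` [fset y]) =
    (u x + u y) `^ eta (cls x) /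
      ((u x + u y) `^ eta (cls x) + u c `^ eta (cls c)) * (u x / (u x + u y)).
Proof.
move=> cy xy nxc.
have xc : x != c by apply: contraNneq nxc => ->.
have yc : y != c by apply: contraNneq nxc => <-; rewrite cy.
have As : [fset x; c] `|` [fset y] =i [:: x; c; y] by move=> z; rewrite !inE orbA.
have us : uniq [:: x; c; y] by rewrite /= !inE negb_or xc xy (eq_sym c) yc.
rewrite nested_logitE ?inE ?eqxx // /nest_total (sum_pred2 _ nxc); last first.
  move=> j; rewrite (nest_nonempty_seq cls _ As) /= orbF cy !(eq_sym j).
  by case: (cls x == j); rewrite ?orbF.
rewrite !(block_sum_seq cls u _ us As) !big_cons !big_nil cy !eqxx eq_sym (negbTE nxc).
by rewrite !addr0.
Qed.

(* On the menu {x, b, x'} the odds of x against b are (u x + u x')^(eta - 1) u x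
   over u b^eta, on {x, b} they are u x^eta over u b^eta; for eta > 1 these
   differ, so x ~_p b forces b into the nest of x. *)
Lemma sim_p_same_nest x x' b : cls x' = cls x -> x != x' -> 1 < eta (cls x) ->
  sim_p p x b -> cls b = cls x.
Proof.
move=> cx' xx' eta1 sxb; apply/eqP; apply: contraT => nbx; exfalso.
have xb : x != b by apply: contraNneq nbx => <-.
have bx' : b != x' by apply: contraNneq nbx => ->; rewrite cx'.
have nxb : (cls x == cls b) = false by rewrite eq_sym (negbTE nbx).
have As : [fset x; b; x'] =i [:: x; b; x'] by move=> z; rewrite !inE orbA.
have us : uniq [:: x; b; x'] by rewrite /= !inE negb_or xb xx' bx'.
have Ps : [fset x; b] =i [:: x; b] by move=> z; rewrite !inE.
have ups : uniq [:: x; b] by rewrite /= !inE xb.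
have := sxb [fset x; b; x'] ltac:(by rewrite !inE eqxx) ltac:(by rewrite !inE eqxx orbT).
rewrite !nested_logit_ratio ?inE ?eqxx ?orbT //.
rewrite !(block_sum_seq cls u _ us As) !(block_sum_seq cls u _ ups Ps).
rewrite !big_cons !big_nil cx' !eqxx (negbTE nbx) nxb !addr0.
have ux := u_gt0 x; have ub := u_gt0 b.
rewrite !divff ?gt_eqF // !mulr1.
move/(congr1 (fun r => r * u b `^ eta (cls b))).
rewrite !divfK ?gt_eqF ?powR_gt0 // => E.
set S := u x + u x' in E *.
have xS : u x < S by rewrite ltrDl u_gt0.
have := powR_superlinear eta1 ux xS; rewrite -E.
have -> : S * (S `^ eta (cls x) * (u x / S)) = u x * S `^ eta (cls x).
  by field; rewrite gt_eqF // (lt_trans ux).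
by rewrite ltxx.
Qed.

Lemma richness_nest_utility x x' t : richness p -> cls x' = cls x -> x != x' ->
  1 < eta (cls x) -> 0 < t -> exists b, [/\ cls b = cls x, x != b & u b = t].
Proof.
move=> rich cx' xx' eta1 t0; have ux := u_gt0 x.
have rho01 : 0 < u x / (u x + t) < 1.
  by rewrite divr_gt0 ?addr_gt0 //= ltr_pdivrMr ?addr_gt0 // mul1r ltrDl.
have [b [sxb pxb]] := rich x _ rho01.
have cb := sim_p_same_nest cx' xx' eta1 sxb.
have xb : x != b.
  by apply: contraTneq rho01 => xb; rewrite -pxb -xb nested_logit_self ltxx andbF.
exists b; split => //; move: pxb; rewrite nested_logit_pair_same_nest //.
move/eqP; rewrite eqr_div ?lt0r_neq0 ?addr_gt0 ?u_gt0 //.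
by move=> /eqP /(mulfI (lt0r_neq0 ux)) /addrI <-.
Qed.

(* Adding y doubles the nest's utility, multiplying its weight by 2^eta > 2,
   while b's share inside the nest is halved. *)
Lemma nested_logit_regularity_fails b y c :
  cls y = cls b -> b != y -> cls b != cls c -> u y = u b -> 1 < eta (cls b) ->
  2 `^ eta (cls b) * u b `^ eta (cls b) < (2 `^ eta (cls b) - 2) * u c `^ eta (cls c) ->
  p b [fset b; c] < p b ([fset b; c] `|` [fset y]).
Proof.
move=> cy yb nbc uyb eta1.
rewrite nested_logit_triple // nested_logit_pair // uyb.
have ub := u_gt0 b; move: (two_lt_powR2 eta1).
have -> : u b + u b = 2 * u b by lra.
rewrite powRM ?ler0n ?ltW //.
have -> : u b / (2 * u b) = 1 / 2 by field; rewrite gt_eqF.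
set q := 2 `^ _; set T := u b `^ _; set C := u c `^ _ => q2 qTC.
have T0 : 0 < T by rewrite powR_gt0.
have C0 : 0 < C by rewrite powR_gt0 ?u_gt0.
have q0 : 0 < q by lra.
rewrite -subr_gt0.
have -> : q * T / (q * T + C) * (1 / 2) - T / (T + C) =
          T * ((q - 2) * C - q * T) / (2 * (q * T + C) * (T + C)).
  by field; rewrite !lt0r_neq0 ?addr_gt0 ?mulr_gt0.
by rewrite divr_gt0 ?mulr_gt0 ?subr_gt0 ?addr_gt0 ?mulr_gt0 //; lra.
Qed.

Lemma nest_singleton_of_eta_gt1 x y c : richness p -> regularity p ->
  cls c != cls x -> 1 < eta (cls x) -> cls y = cls x -> y = x.
Proof.
move=> rich reg ncx eta1 cy; apply/eqP; apply: contraT => yx; exfalso.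
set e := eta (cls x) in eta1.
have q2 := two_lt_powR2 eta1.
have C0 : 0 < u c `^ eta (cls c) by rewrite powR_gt0 ?u_gt0.
have [t t0 tm] : exists2 t, 0 < t & t `^ e < (2 `^ e - 2) * u c `^ eta (cls c) / 2 `^ e.
  by apply: exists_powR_lt; rewrite ?divr_gt0 ?mulr_gt0 ?subr_gt0 //; lra.
have [b [cb xb ubt]] := richness_nest_utility rich cy ltac:(by rewrite eq_sym) eta1 t0.
have bx : b != x by rewrite eq_sym.
have eta1b : 1 < eta (cls b) by rewrite cb.
have [y' [cy' by' uy't]] := richness_nest_utility rich (esym cb) bx eta1b t0.
have bc : cls b != cls c by rewrite cb eq_sym.
have := reg [fset b; c] ltac:(by apply/fset0Pn; exists b; rewrite !inE eqxx)
  b ltac:(by rewrite !inE eqxx) y'.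
rewrite leNgt => /negP; apply; apply: (nested_logit_regularity_fails cy' by' bc).
- by rewrite uy't ubt.
- exact: eta1b.
- by rewrite cb ubt mulrC -ltr_pdivlMr //; lra.
Qed.

Lemma nested_logit_rep_single_nest : (forall x y, cls x = cls y) ->
  nested_logit_rep p cls u (fun=> 1).
Proof.
move=> one_nest.
split; [by case: rep | exact: u_gt0 | by move=> _; apply: ltr01 | move=> A _ a aA].
have nestE j : ([fset x in A | cls x == j] != fset0) = (j == cls a).
  apply/fset0Pn/eqP => [[z]|->]; first by rewrite !inE => /andP[_ /eqP <-].
  by exists a; rewrite !inE aA eqxx.
rewrite (nested_logitE aA) /nest_total !(big_pred1 _ nestE).
have Ba := block_sum_gt0 cls u_gt0 aA.
by rewrite powRr1 ?ltW // !divff ?mul1r // gt_eqF ?powR_gt0.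
Qed.

(* Under the hypothesis of the next lemma every nest with eta > 1 is a
   singleton {x}, whose weight u(x)^eta is kept by exponent 1 and utility
   u(x)^eta. *)
Definition flat_utility x := if eta (cls x) <= 1 then u x else u x `^ eta (cls x).

Definition flat_eta j := if eta j <= 1 then eta j else 1.

Lemma nested_logit_rep_flatten :
  (forall x y, 1 < eta (cls x) -> cls y = cls x -> y = x) ->
  nested_logit_rep p cls flat_utility flat_eta.
Proof.
move=> nest_single.
have flat_gt0 x : 0 < flat_utility x.
  by rewrite /flat_utility; case: ifP => _; rewrite ?powR_gt0 ?u_gt0.
have flat_nestE (A : {fset X}) j :
    block_sum cls flat_utility A j `^ flat_eta j = bs A j `^ eta j.
  rewrite /flat_eta; case: ifP => ej.
    by congr (_ `^ _); apply: eq_bigr => x /eqP cx; rewrite /flat_utility cx ej.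
  rewrite powRr1 ?sumr_ge0 // => [|x _]; last exact: ltW.
  have [[x xA cx] | nAj] := pselect (exists2 x, x \in A & cls x = j).
    have xj y : cls y = j -> y = x.
      by move=> cy; apply: nest_single; rewrite ?cx ?ltNge ?ej.
    by rewrite !(block_sum_single _ xA cx xj) /flat_utility cx ej.
  have Aj y : y \in A -> cls y != j.
    by move=> yA; apply/eqP => cy; apply: nAj; exists y.
  by rewrite !(block_sum_eq0 _ Aj) powR0 // gt_eqF ?nested_logit_eta_gt0.
have flat_shareE (A : {fset X}) a : a \in A ->
    flat_utility a / block_sum cls flat_utility A (cls a) = u a / bs A (cls a).
  move=> aA; case: (boolP (eta (cls a) <= 1)) => ea.
    congr (_ / _); first by rewrite /flat_utility ea.
    by apply: eq_bigr => x /eqP cx; rewrite /flat_utility cx ea.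
  have aj y : cls y = cls a -> y = a by apply: nest_single; rewrite ltNge.
  by rewrite !(block_sum_single _ aA erefl aj) !divff ?gt_eqF ?u_gt0.
split => //.
- by case: rep.
- by move=> j; rewrite /flat_eta; case: ifP => // _; apply: nested_logit_eta_gt0.
move=> A _ a aA; rewrite (nested_logitE aA) flat_shareE // /nest_total.
by congr (_ / _ * _); [rewrite flat_nestE | apply: eq_bigr => j _; rewrite flat_nestE].
Qed.

End NestedLogitRep.

Theorem proposition3 (R : realType) (X : choiceType) (p : X -> {fset X} -> R) :
  stochastic_choice p -> nested_logit p -> regularity p -> richness p ->
  random_utility_nested_logit p.
Proof.
move=> _ [K [cls [u [eta rep]]]] reg rich.
have [[c [d ncd]] | one_nest] := pselect (exists c d, cls c != cls d); last first.
  exists K, cls, u, (fun=> 1); split=> //; apply: (nested_logit_rep_single_nest rep).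
  move=> x y; have [//|nxy] := eqVneq (cls x) (cls y).
  by exfalso; apply: one_nest; exists x, y.
exists K, cls, (flat_utility cls u eta), (flat_eta eta); split.
  apply: (nested_logit_rep_flatten rep) => x y eta1 cy.
  have [e ne] : exists e, cls e != cls x.
    by case: (eqVneq (cls c) (cls x)) => [<-|]; [exists d; rewrite eq_sym | exists c].
  exact: (nest_singleton_of_eta_gt1 rep rich reg ne eta1 cy).
by move=> j; rewrite /flat_eta; case: ifP => // /negbT; rewrite -ltNge => /ltW.
Qed.
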